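(* Let $(\eta_k)_{k\ge1}$ be a sequence of real numbers and suppose there are $\varepsilon>0$, $C>0$, $D>0$, $\tilde\beta\in[0,1]$ and $k_0$ such that for all $k\ge k_0$ $$0\le\eta_k\le1-\varepsilon\quad\text{and}\quad \eta_{k+1}\le\eta_k\Big[1-\frac{C(1-\eta_k)}{k}\Big]+\frac{D}{k^{1+\tilde\beta}}.$$ Then $\limsup_{k\to\infty}\eta_k h(k)<\infty$, where $h(k)=k^{\tilde\beta}$ if $\tilde\beta<C$, $h(k)=k^{\tilde\beta}/\log k$ if $\tilde\beta=C$, and $h(k)=k^{C}$ if $\tilde\beta>C$. *)

From Stdlib Require Import Reals Lra Lia.
Open Scope R_scope.

(* Real powers of k are taken with Rpower (k > 0 for k >= 1). *)
Definition rate_h (beta C : R) (k : nat) : R :=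
  match Rlt_dec beta C with
  | left _ => Rpower (INR k) beta
  | right _ =>
      match Req_EM_T beta C with
      | left _ => Rpower (INR k) beta / ln (INR k)
      | right _ => Rpower (INR k) C
      end
  end.

Definition limsup_finite (u : nat -> R) : Prop :=
  exists M : R, exists N : nat, forall k : nat, (N <= k)%nat -> u k <= M.

From Stdlib Require Import Reals Lra Lia Psatz.
Open Scope R_scope.

(* The core is the linear recursion x_{k+1} <= x_k (1 - a/k) + D/k^(1+b),
   named [chung_rec].  For it we prove Chung's three rates by induction on k,
   each induction step being an elementary inequality about one step:
   x_k k^b is bounded if b < a, x_k k^a = O(ln k) if b = a, and x_k k^a is
   bounded if a < b (with an auxiliary correction term N/k^(b-a)).
   The nonlinear recursion is reduced to the linear one in two phases.
   Phase 1: since eta_k <= 1 - eps, the contraction factor is at least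
   C eps / k, so for some 0 < g <= beta we get eta_k = O(k^-g).
   Phase 2: the weighted sequence z_k = eta_k (1 + L/k^g), for L large,
   absorbs the nonlinear term C eta_k^2 / k and satisfies the linear recursion
   with a = C exactly; since eta_k <= z_k, Chung's rates for z give the
   theorem.  The case beta = 0 is trivial since then h = 1 and eta <= 1. *)

Lemma ln_le_sub1 (y : R) : 0 < y -> ln y <= y - 1.
Proof.
  intro Hy. pose proof (exp_ineq1_le (ln y)) as H.
  rewrite exp_ln in H; lra.
Qed.

Lemma ln_succ_bounds (x : R) : 0 < x -> 1/(x+1) <= ln (x+1) - ln x <= 1/x.
Proof.
  intro Hx.
  assert (Hq1 : 0 < x/(x+1)) by (apply Rdiv_lt_0_compat; lra).
  assert (Hq2 : 0 < (x+1)/x) by (apply Rdiv_lt_0_compat; lra).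
  split.
  - assert (E : ln x = ln (x+1) + ln (x/(x+1))).
    { rewrite <- ln_mult by lra. f_equal. field. lra. }
    pose proof (ln_le_sub1 _ Hq1).
    assert (x/(x+1) - 1 = - (1/(x+1))) by (field; lra). lra.
  - assert (E : ln (x+1) = ln x + ln ((x+1)/x)).
    { rewrite <- ln_mult by lra. f_equal. field. lra. }
    pose proof (ln_le_sub1 _ Hq2).
    assert ((x+1)/x - 1 = 1/x) by (field; lra). lra.
Qed.

Lemma Rpower_pos (y b : R) : 0 < Rpower y b.
Proof. unfold Rpower; apply exp_pos. Qed.

Lemma Rpower_succ (x b : R) : 0 < x ->
  Rpower (x+1) b = Rpower x b * exp (b * (ln (x+1) - ln x)).
Proof. intro. unfold Rpower. rewrite <- exp_plus. f_equal. ring. Qed.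

Lemma Rpower_1plus (y b : R) : 0 < y -> Rpower y (1+b) = y * Rpower y b.
Proof. intro. rewrite Rpower_plus, Rpower_1 by lra. ring. Qed.

Lemma Rpower_succ_growth (x b : R) : 0 < x -> 0 <= b ->
  (1 - b/x) * Rpower (x+1) b <= Rpower x b.
Proof.
  intros Hx Hb. rewrite Rpower_succ by lra.
  set (d := ln (x+1) - ln x).
  pose proof (ln_succ_bounds x Hx) as [H1 H2]. fold d in H1, H2.
  pose proof (exp_ineq1_le (- (b*d))) as E1.
  assert (b * d <= b/x).
  { unfold Rdiv. replace (b * /x) with (b * (1/x)) by (field; lra).
    apply Rmult_le_compat_l; lra. }
  assert (Eq : exp (-(b*d)) * exp (b*d) = 1).
  { rewrite <- exp_plus. replace (-(b*d) + b*d) with 0 by ring. apply exp_0. }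
  pose proof (exp_pos (b*d)).
  pose proof (Rpower_pos x b).
  assert ((1 - b/x) * exp (b*d) <= 1).
  { rewrite <- Eq. apply Rmult_le_compat_r; lra. }
  nra.
Qed.

Lemma Rpower_inv_succ_decay (x s : R) : 1 <= x -> 0 <= s <= 1 ->
  / Rpower (x+1) s <= / Rpower x s * (1 - s/(4*x)).
Proof.
  intros Hx Hs. rewrite Rpower_succ by lra.
  set (d := ln (x+1) - ln x).
  pose proof (ln_succ_bounds x ltac:(lra)) as [H1 H2]. fold d in H1, H2.
  pose proof (exp_ineq1_le (s*d)) as E1.
  assert (s/(2*x) <= s * d).
  { apply Rle_trans with (s * (1/(x+1))).
    - unfold Rdiv. rewrite Rmult_1_l. apply Rmult_le_compat_l; [lra|].
      apply Rinv_le_contravar; lra.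
    - apply Rmult_le_compat_l; lra. }
  pose proof (Rpower_pos x s).
  set (P := Rpower x s) in *. set (q := exp (s*d)) in *.
  assert (hq : 1 + s/(2*x) <= q) by lra.
  assert (0 <= s/(2*x) <= 1/2).
  { split. apply Rmult_le_pos; [lra| left; apply Rinv_0_lt_compat; lra].
    apply Rmult_le_reg_r with (2*x); [lra|]. unfold Rdiv. field_simplify; lra. }
  replace (s/(4*x)) with ((s/(2*x))/2) by (field; lra).
  set (u := s/(2*x)) in *.
  rewrite Rinv_mult.
  apply Rmult_le_compat_l. left; apply Rinv_0_lt_compat; lra.
  apply Rle_trans with (/ (1+u)). apply Rinv_le_contravar; lra.
  apply Rmult_le_reg_r with (1+u); [lra|]. rewrite Rinv_l by lra. nra.
Qed.

Lemma nat_ind_from (K : nat) (P : nat -> Prop) :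
  P K -> (forall k, (K <= k)%nat -> P k -> P (S k)) ->
  forall k, (K <= k)%nat -> P k.
Proof.
  intros H0 HS k Hk. replace k with (K + (k - K))%nat by lia.
  induction (k - K)%nat as [|n IH]; [rewrite Nat.add_0_r; auto|].
  replace (K + S n)%nat with (S (K+n)) by lia. apply HS; [lia|auto].
Qed.

Lemma exists_large_nat (r : R) (n : nat) : exists K, (n <= K)%nat /\ r <= INR K.
Proof.
  destruct (INR_unbounded (Rmax r (INR n))) as [K HK].
  exists K. split.
  - assert (INR n < INR K) by (pose proof (Rmax_r r (INR n)); lra).
    apply INR_lt in H; lia.
  - pose proof (Rmax_l r (INR n)); lra.
Qed.

Lemma limsup_finite_mono (u v : nat -> R) (N : nat) :
  (forall k, (N <= k)%nat -> u k <= v k) -> limsup_finite v -> limsup_finite u.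
Proof.
  intros Huv [M [N' HM]]. exists M, (Nat.max N N'). intros k Hk.
  apply Rle_trans with (v k); [apply Huv | apply HM]; lia.
Qed.

Lemma rate_h_nonneg (beta C : R) (k : nat) : (2 <= k)%nat -> 0 <= rate_h beta C k.
Proof.
  intro Hk. assert (Hk2 : 2 <= INR k) by (apply (le_INR 2); exact Hk).
  assert (Hln : 0 < ln (INR k)) by (rewrite <- ln_1; apply ln_increasing; lra).
  unfold rate_h.
  destruct (Rlt_dec beta C); [|destruct (Req_EM_T beta C)];
    try (left; apply Rpower_pos).
  left; apply Rdiv_lt_0_compat; [apply Rpower_pos | exact Hln].
Qed.

Definition chung_rec (x : nat -> R) (a b D : R) (K : nat) : Prop :=
  forall k, (K <= k)%nat -> 0 <= x k /\
    x (S k) <= x k * (1 - a / INR k) + D / Rpower (INR k) (1 + b).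

(* Subcritical rate b < a.  One step: the bound x_k k^b <= M propagates as
   soon as D <= M (a - b); here P = k^b, Q = (k+1)^b, y = k. *)
Lemma subcritical_step (xk xs P Q y a b D M : R) : 0 < P -> 0 < Q -> 0 < y ->
  (1 - b/y) * Q <= P -> 0 <= 1 - a/y -> 0 <= xk -> xk * P <= M ->
  xs <= xk * (1 - a/y) + D / (y * P) -> D <= M * (a - b) -> xs * Q <= M.
Proof.
  intros HP HQ Hy HF Ha Hx HM Hs HD.
  assert (xk <= M / P).
  { apply Rmult_le_reg_r with P; [lra|].
    unfold Rdiv; rewrite Rmult_assoc, Rinv_l; lra. }
  assert (Hxs : xs <= M * (1 - b/y) / P).
  { eapply Rle_trans; [exact Hs|].
    apply Rle_trans with (M / P * (1 - a/y) + D/(y*P)).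
    { apply Rplus_le_compat_r. apply Rmult_le_compat_r; lra. }
    replace (M / P * (1 - a/y) + D/(y*P)) with ((M * (1 - a/y) + D / y)/P)
      by (field; lra).
    unfold Rdiv at 1 3. apply Rmult_le_compat_r; [left; apply Rinv_0_lt_compat; lra|].
    assert (M*(1-a/y) + D/y - M*(1-b/y) = (D - M*(a-b))/y) by (field; lra).
    assert ((D - M*(a-b))/y <= 0).
    { unfold Rdiv. assert (0 < /y) by (apply Rinv_0_lt_compat; lra). nra. }
    lra. }
  assert (0 <= M) by nra.
  apply Rle_trans with (M * (1 - b/y) / P * Q); [apply Rmult_le_compat_r; lra|].
  replace (M * (1 - b/y) / P * Q) with (M * ((1 - b/y) * Q) / P) by (field; lra).
  apply Rmult_le_reg_r with P; [lra|].
  unfold Rdiv. rewrite Rmult_assoc, Rinv_l by lra. nra.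
Qed.

Lemma chung_rate_subcritical (x : nat -> R) (a b D : R) (K : nat) :
  0 <= b < a -> 0 <= D -> 1 <= INR K -> a <= INR K -> chung_rec x a b D K ->
  exists M, forall k, (K <= k)%nat -> x k * Rpower (INR k) b <= M.
Proof.
  intros Hb HD HK1 HKa Hrec.
  exists (Rmax (x K * Rpower (INR K) b) (D/(a-b))).
  apply nat_ind_from; [apply Rmax_l|].
  intros k Hk IH. set (M := Rmax _ _) in *.
  assert (HkK : INR K <= INR k) by (apply le_INR; lia).
  destruct (Hrec k Hk) as [Hx Hs].
  rewrite S_INR.
  apply (subcritical_step (x k) (x (S k)) (Rpower (INR k) b) (Rpower (INR k + 1) b)
           (INR k) a b D M); try apply Rpower_pos; try lra; auto.
  - apply Rpower_succ_growth; lra.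
  - assert (0 < a/INR k <= 1); [|lra].
    split; [apply Rdiv_lt_0_compat; lra|].
    apply Rmult_le_reg_r with (INR k); [lra|].
    unfold Rdiv. rewrite Rmult_assoc, Rinv_l; lra.
  - rewrite <- Rpower_1plus by lra. exact Hs.
  - assert (D/(a-b) <= M) by apply Rmax_r.
    apply Rmult_le_reg_r with (/(a-b)); [apply Rinv_0_lt_compat; lra|].
    rewrite Rmult_assoc, Rinv_r by lra. lra.
Qed.

(* Critical rate b = a.  One step: x_k k^a <= M ln k propagates, using
   ln (k+1) >= ln k + 1/(k+1) and 4 D <= M. *)
Lemma critical_step (xk xs P Q y a D M L L' : R) :
  0 < P -> 0 < Q -> 2 <= y -> 0 < a -> 2*a <= y ->
  (1 - a/y) * Q <= P -> 0 <= xk -> xk * P <= M * L ->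
  xs <= xk * (1 - a/y) + D / (y * P) -> L + 1/(y+1) <= L' -> 0 <= L ->
  0 <= D -> 4*D <= M -> xs * Q <= M * L'.
Proof.
  intros HP HQ Hy Ha Hay HF Hx HM Hs HL HL0 HD HDM.
  set (c := 1 - a/y) in *.
  assert (Hc : 1/2 <= c <= 1).
  { unfold c. assert (a/y <= 1/2).
    { apply Rmult_le_reg_r with y; [lra|]. unfold Rdiv. field_simplify; lra. }
    assert (0 <= a/y) by (apply Rmult_le_pos; [lra| left; apply Rinv_0_lt_compat; lra]).
    lra. }
  set (r := Q / P).
  assert (Hr1 : c * r <= 1).
  { unfold r. apply Rmult_le_reg_r with P; [lra|]. unfold Rdiv. field_simplify; lra. }
  assert (Hr0 : 0 < r) by (apply Rdiv_lt_0_compat; lra).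
  assert (Hr2 : r <= 2) by nra.
  assert (Hxk : xk <= M * L / P).
  { apply Rmult_le_reg_r with P; [lra|]. unfold Rdiv; rewrite Rmult_assoc, Rinv_l; lra. }
  assert (xs <= (M*L*c + D/y) / P).
  { eapply Rle_trans; [exact Hs|].
    replace ((M*L*c + D/y) / P) with (M*L/P*c + D/(y*P)) by (field; lra).
    apply Rplus_le_compat_r. apply Rmult_le_compat_r; lra. }
  assert (xs * Q <= (M*L*c + D/y) * r).
  { unfold r. replace ((M*L*c + D/y) * (Q/P)) with ((M*L*c + D/y)/P * Q) by (field; lra).
    apply Rmult_le_compat_r; lra. }
  assert (0 <= M) by lra.
  assert (M*L*c*r <= M*L) by (assert (0 <= M*L) by nra; nra).
  assert (D/y*r <= 2*D/y).
  { unfold Rdiv. assert (0 < /y) by (apply Rinv_0_lt_compat; lra).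
    replace (2*D*/y) with (D*/y*2) by ring. apply Rmult_le_compat_l; [|lra].
    apply Rmult_le_pos; lra. }
  assert (2*D/y <= M * (1/(y+1))).
  { apply Rmult_le_reg_r with (y*(y+1)); [nra|]. unfold Rdiv. field_simplify; try lra. nra. }
  assert (M*(L + 1/(y+1)) <= M * L') by (apply Rmult_le_compat_l; lra).
  nra.
Qed.

Lemma chung_rate_critical (x : nat -> R) (a D : R) (K : nat) :
  0 < a -> 0 <= D -> 2 <= INR K -> 2*a <= INR K -> chung_rec x a a D K ->
  exists M, forall k, (K <= k)%nat -> x k * Rpower (INR k) a <= M * ln (INR k).
Proof.
  intros Ha HD HK1 HKa Hrec.
  assert (HlK : 0 < ln (INR K)) by (rewrite <- ln_1; apply ln_increasing; lra).
  exists (Rmax (x K * Rpower (INR K) a / ln (INR K)) (4*D)).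
  apply nat_ind_from.
  { set (A := x K * Rpower (INR K) a).
    assert (A / ln (INR K) <= Rmax (A / ln (INR K)) (4*D)) by apply Rmax_l.
    replace A with (A / ln (INR K) * ln (INR K)) at 1 by (field; lra).
    apply Rmult_le_compat_r; lra. }
  intros k Hk IH. set (M := Rmax _ _) in *.
  assert (HkK : INR K <= INR k) by (apply le_INR; lia).
  destruct (Hrec k Hk) as [Hx Hs].
  pose proof (ln_succ_bounds (INR k)) as [Hd _]; [lra|].
  rewrite S_INR.
  apply (critical_step (x k) (x (S k)) (Rpower (INR k) a) (Rpower (INR k + 1) a)
           (INR k) a D M (ln (INR k))); try apply Rpower_pos; try lra; auto.
  - apply Rpower_succ_growth; lra.
  - rewrite <- Rpower_1plus by lra. exact Hs.
  - left. rewrite <- ln_1; apply ln_increasing; lra.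
  - apply Rmax_r.
Qed.

(* One step: with s = b - a the invariant
   x_k k^a <= M - N/k^s propagates when N s = 4 c D, where c bounds
   (k+1)^a / k^a; the gain N s/(4k) of the correction term N/k^s pays
   for the forcing term. *)
Lemma supercritical_step (xk xs P Q S S' y a s D M N c : R) :
  0 < P -> 0 < Q -> 0 < S -> 0 < S' -> 1 <= y ->
  0 <= 1 - a/y -> (1 - a/y) * Q <= P -> Q <= c * P -> / S' <= / S * (1 - s/(4*y)) ->
  0 <= xk -> xk * P <= M - N / S ->
  xs <= xk * (1 - a/y) + D / (y * (P * S)) -> N * s = 4 * c * D -> 0 <= D ->
  0 < c -> 0 < s -> xs * Q <= M - N / S'.
Proof.
  intros HP HQ HS HS' Hy Ha HF HQc HT Hx HM Hs HN HD Hc Hsp.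
  assert (HN0 : 0 <= N) by (apply Rmult_le_reg_r with s; [lra|]; rewrite HN; nra).
  assert (xs * Q <= xk * (1 - a/y) * Q + D / (y*(P*S)) * Q).
  { rewrite <- Rmult_plus_distr_r. apply Rmult_le_compat_r; lra. }
  assert (xk * (1 - a/y) * Q <= xk * P).
  { rewrite Rmult_assoc. apply Rmult_le_compat_l; lra. }
  assert (D / (y*(P*S)) * Q <= c * D / (y * S)).
  { replace (D / (y*(P*S)) * Q) with (D / (y*S) * (Q / P)) by (field; lra).
    replace (c * D / (y * S)) with (D / (y*S) * c) by (field; lra).
    apply Rmult_le_compat_l.
    - apply Rmult_le_pos; [lra|]. left; apply Rinv_0_lt_compat; nra.
    - apply Rmult_le_reg_r with P; [lra|]. unfold Rdiv. field_simplify; lra. }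
  assert (N / S' <= N / S - c * D / (y*S)).
  { unfold Rdiv at 1. apply Rle_trans with (N * (/ S * (1 - s/(4*y))));
      [apply Rmult_le_compat_l; lra|].
    apply Req_le. unfold Rdiv. replace (c*D) with (N*s/4) by lra. field. lra. }
  lra.
Qed.

Lemma chung_rate_supercritical (x : nat -> R) (a b D : R) (K : nat) :
  0 < a < b -> b - a <= 1 -> 0 <= D -> 1 <= INR K -> a <= INR K ->
  chung_rec x a b D K ->
  exists M, forall k, (K <= k)%nat -> x k * Rpower (INR k) a <= M.
Proof.
  intros Hab Hs1 HD HK1 HKa Hrec.
  set (s := b - a). set (c := Rpower 2 a). set (N := 4 * c * D / s).
  assert (Hc : 0 < c) by apply Rpower_pos.
  assert (HN : N * s = 4 * c * D) by (unfold N; field; unfold s; lra).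
  assert (HN0 : 0 <= N).
  { unfold N; apply Rmult_le_pos; [nra| left; apply Rinv_0_lt_compat; unfold s; lra]. }
  set (M := x K * Rpower (INR K) a + N / Rpower (INR K) s).
  assert (Hinv : forall k, (K <= k)%nat -> x k * Rpower (INR k) a <= M - N / Rpower (INR k) s).
  { apply nat_ind_from; [unfold M; lra|].
    intros k Hk IH.
    assert (HkK : INR K <= INR k) by (apply le_INR; lia).
    destruct (Hrec k Hk) as [Hx Hs].
    rewrite S_INR.
    apply (supercritical_step (x k) (x (S k)) (Rpower (INR k) a) (Rpower (INR k + 1) a)
             (Rpower (INR k) s) (Rpower (INR k + 1) s) (INR k) a s D M N c);
      try apply Rpower_pos; try lra; auto.
    - assert (0 < a/INR k <= 1); [|lra].
      split; [apply Rdiv_lt_0_compat; lra|].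
      apply Rmult_le_reg_r with (INR k); [lra|].
      unfold Rdiv. rewrite Rmult_assoc, Rinv_l; lra.
    - apply Rpower_succ_growth; lra.
    - unfold c. rewrite Rpower_mult_distr by lra. apply Rle_Rpower_l; lra.
    - apply Rpower_inv_succ_decay; unfold s; lra.
    - replace (1 + b) with (1 + (a + s)) in Hs by (unfold s; ring).
      rewrite Rpower_1plus, Rpower_plus in Hs by lra. exact Hs.
    - unfold s; lra. }
  exists M. intros k Hk. specialize (Hinv k Hk).
  assert (0 <= N / Rpower (INR k) s).
  { apply Rmult_le_pos; [lra| left; apply Rinv_0_lt_compat; apply Rpower_pos]. }
  lra.
Qed.

Lemma chung_rate_h (x : nat -> R) (C beta D : R) (K : nat) :
  0 < C -> 0 <= beta <= 1 -> 0 <= D -> (2 <= K)%nat -> 2*C <= INR K ->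
  chung_rec x C beta D K -> limsup_finite (fun k => x k * rate_h beta C k).
Proof.
  intros HC Hbeta HD HK HKC Hrec.
  assert (HK2 : 2 <= INR K) by (apply (le_INR 2); exact HK).
  unfold limsup_finite, rate_h.
  destruct (Rlt_dec beta C) as [Hlt|Hnlt].
  - destruct (chung_rate_subcritical x C beta D K) as [M HM]; try lra; auto.
    exists M, K. exact HM.
  - destruct (Req_EM_T beta C) as [<-|Hne].
    + destruct (chung_rate_critical x beta D K) as [M HM]; try lra; auto.
      exists M, K. intros k Hk. specialize (HM k Hk).
      assert (INR K <= INR k) by (apply le_INR; lia).
      assert (Hln : 0 < ln (INR k)) by (rewrite <- ln_1; apply ln_increasing; lra).
      replace (x k * (Rpower (INR k) beta / ln (INR k)))
        with (x k * Rpower (INR k) beta / ln (INR k)) by (field; lra).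
      apply Rmult_le_reg_r with (ln (INR k)); [lra|].
      unfold Rdiv. rewrite Rmult_assoc, Rinv_l; lra.
    + destruct (chung_rate_supercritical x C beta D K) as [M HM]; try lra; auto.
      exists M, K. exact HM.
Qed.

(* Phase 2: the weight 1 + L/k^g absorbs the nonlinear term.  With
   t = 1/k^g, t' = 1/(k+1)^g (so t' <= t (1 - g/(4k))), c = 1 - C/k and
   E = C M1 where eta_k <= M1 t, the key inequality is
   (c + E t/k)(1 + L t') <= c (1 + L t), which holds once 16 E <= L g. *)
Lemma weight_absorbs (y t t' c E g L : R) : 1 <= y -> 1/2 <= c <= 1 -> 0 < t ->
  L * t <= 1 -> 0 <= t' <= t * (1 - g/(4*y)) -> 16 * E <= L * g ->
  0 <= E -> 0 <= L -> 0 < g ->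
  (c + E*t/y) * (1 + L*t') <= c * (1 + L*t).
Proof.
  intros Hy Hc Ht HLt Ht' HEL HE HL Hg.
  assert (Hgy : 0 <= g/(4*y)) by (apply Rmult_le_pos; [lra|left; apply Rinv_0_lt_compat; lra]).
  assert (HEt : 0 <= E * t / y).
  { unfold Rdiv; apply Rmult_le_pos; [nra|left; apply Rinv_0_lt_compat; lra]. }
  assert (Hgain : 1 + L*t' <= 1 + L*t - L*g*t/(4*y)).
  { assert (L*t' <= L*(t*(1 - g/(4*y)))) by (apply Rmult_le_compat_l; lra).
    replace (L * g * t / (4*y)) with (L * t * (g/(4*y))) by (field; lra). nra. }
  apply Rle_trans with ((c + E*t/y) * (1 + L*t - L*g*t/(4*y)));
    [apply Rmult_le_compat_l; lra|].
  apply Rmult_le_reg_r with (4*y*y/t); [apply Rdiv_lt_0_compat; nra|].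
  replace ((c + E * t / y) * (1 + L * t - L * g * t / (4 * y)) * (4 * y * y / t))
    with (4*y*y*c/t + 4*y*y*c*L - c*L*g*y + 4*E*y + 4*E*y*L*t - E*L*g*t)
    by (field; lra).
  replace (c * (1 + L * t) * (4 * y * y / t)) with (4*y*y*c/t + 4*y*y*c*L)
    by (field; lra).
  assert (4*E*y*(1 + L*t) <= c*L*g*y).
  { assert (4*E*(1+L*t) <= 8*E) by nra.
    assert (8*E <= c*L*g).
    { assert (0 <= (c - 1/2) * (L*g)) by (apply Rmult_le_pos; [lra | apply Rmult_le_pos; lra]).
      nra. }
    assert (0 <= (c*L*g - 4*E*(1+L*t))*y) by (apply Rmult_le_pos; lra). nra. }
  assert (0 <= E*L*g*t) by (apply Rmult_le_pos; [|lra]; apply Rmult_le_pos; nra).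
  lra.
Qed.

Lemma weighted_step (e es y t t' C g L M1 F : R) : 1 <= y -> 2*C <= y -> 0 < C ->
  0 <= e -> e <= M1 * t -> 0 < t -> L * t <= 1 -> 0 <= t' <= t * (1 - g/(4*y)) ->
  es <= e * (1 - C * (1 - e) / y) + F -> 16 * (C * M1) <= L * g -> 0 <= L ->
  0 <= F -> 0 < g ->
  es * (1 + L * t') <= e * (1 + L * t) * (1 - C/y) + 2 * F.
Proof.
  intros Hy HyC HC He HeM Ht HLt Ht' Hes HL HL0 HF Hg.
  set (c := 1 - C/y).
  assert (Hc : 1/2 <= c <= 1).
  { unfold c. assert (C/y <= 1/2).
    { apply Rmult_le_reg_r with y; [lra|]. unfold Rdiv. field_simplify; lra. }
    assert (0 <= C/y) by (apply Rmult_le_pos; [lra| left; apply Rinv_0_lt_compat; lra]).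
    lra. }
  set (E := C * M1).
  assert (HM1 : 0 <= M1) by (apply Rmult_le_reg_r with t; [lra|]; nra).
  assert (HE0 : 0 <= E) by (unfold E; nra).
  assert (Hlin : es <= e * (c + E * t / y) + F).
  { eapply Rle_trans; [exact Hes|]. apply Rplus_le_compat_r.
    apply Rmult_le_compat_l; [lra|].
    unfold c, E. replace (C * (1 - e) / y) with (C/y - C * e / y) by (field; lra).
    assert (C * e / y <= C * M1 * t / y).
    { unfold Rdiv. apply Rmult_le_compat_r; [left; apply Rinv_0_lt_compat; lra|].
      rewrite Rmult_assoc. apply Rmult_le_compat_l; lra. }
    lra. }
  assert (Hgy : 0 <= g/(4*y)) by (apply Rmult_le_pos; [lra|left; apply Rinv_0_lt_compat; lra]).
  assert (Hw : 1 <= 1 + L * t' <= 2).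
  { assert (t' <= t) by nra.
    assert (L * t' <= L * t) by (apply Rmult_le_compat_l; lra).
    assert (0 <= L * t') by (apply Rmult_le_pos; lra). lra. }
  assert (Hmul : es * (1 + L*t') <= (e * (c + E*t/y) + F) * (1 + L*t'))
    by (apply Rmult_le_compat_r; lra).
  assert (Habs := weight_absorbs y t t' c E g L Hy Hc Ht HLt Ht' HL HE0 HL0 Hg).
  assert (e * (c + E*t/y) * (1 + L*t') <= e * (1 + L*t) * c).
  { rewrite Rmult_assoc. replace (e * (1 + L*t) * c) with (e * (c * (1 + L*t))) by ring.
    apply Rmult_le_compat_l; lra. }
  nra.
Qed.

Definition weighted (x : nat -> R) (L g : R) (k : nat) : R :=
  x k * (1 + L / Rpower (INR k) g).

Lemma weighted_chung_rec (x : nat -> R) (C D beta g L M1 : R) (K : nat) :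
  0 < C -> 0 < g <= 1 -> 0 <= D -> 16*(C*M1) <= L*g -> 0 <= L ->
  1 <= INR K -> 2*C <= INR K ->
  (forall k, (K <= k)%nat -> 0 <= x k /\ x k * Rpower (INR k) g <= M1 /\
     L <= Rpower (INR k) g /\
     x (S k) <= x k * (1 - C*(1 - x k)/INR k) + D / Rpower (INR k) (1+beta)) ->
  chung_rec (weighted x L g) C beta (2*D) K.
Proof.
  intros HC Hg HD HL HL0 HK1 HK2 H k Hk.
  destruct (H k Hk) as [He [HeM [HLp Hs]]].
  assert (HkK : INR K <= INR k) by (apply le_INR; lia).
  assert (HP : 0 < Rpower (INR k) g) by apply Rpower_pos.
  assert (HP' : 0 < Rpower (INR k + 1) g) by apply Rpower_pos.
  unfold weighted. split.
  { apply Rmult_le_pos; [lra|].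
    assert (0 <= L / Rpower (INR k) g).
    { apply Rmult_le_pos; [lra|left; apply Rinv_0_lt_compat; lra]. }
    lra. }
  replace (2 * D / Rpower (INR k) (1+beta)) with (2 * (D / Rpower (INR k) (1+beta)))
    by (unfold Rdiv; ring).
  rewrite S_INR. unfold Rdiv at 1 2.
  apply (weighted_step (x k) (x (S k)) (INR k) (/ Rpower (INR k) g)
           (/ Rpower (INR k + 1) g) C g L M1); try lra; auto.
  - apply Rmult_le_reg_r with (Rpower (INR k) g); [lra|]. rewrite Rmult_assoc, Rinv_l; lra.
  - apply Rinv_0_lt_compat; lra.
  - apply Rmult_le_reg_r with (Rpower (INR k) g); [lra|]. rewrite Rmult_assoc, Rinv_l; lra.
  - split; [left; apply Rinv_0_lt_compat; lra|]. apply Rpower_inv_succ_decay; lra.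
  - apply Rmult_le_pos; [lra|left; apply Rinv_0_lt_compat; apply Rpower_pos].
Qed.

Lemma rate_h_zero (C : R) (k : nat) : 0 < C -> (1 <= k)%nat -> rate_h 0 C k = 1.
Proof.
  intros HC Hk. assert (0 < INR k) by (apply lt_0_INR; lia).
  unfold rate_h. destruct (Rlt_dec 0 C) as [_|Hn]; [|lra].
  apply Rpower_O; lra.
Qed.

Section NonlinearRecursion.

Variables (eta : nat -> R) (eps C D beta : R) (k0 : nat).
Hypotheses (heps : 0 < eps) (hC : 0 < C) (hD : 0 < D)
  (hbeta_pos : 0 < beta) (hbeta1 : beta <= 1).
Hypothesis hbound : forall k : nat, (k0 <= k)%nat -> (1 <= k)%nat ->
  0 <= eta k /\ eta k <= 1 - eps.
Hypothesis hrec : forall k : nat, (k0 <= k)%nat -> (1 <= k)%nat ->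
  eta (S k) <= eta k * (1 - C * (1 - eta k) / INR k)
               + D / Rpower (INR k) (1 + beta).

(* Since 1 - eta_k >= eps, eta satisfies the linear recursion with
   contraction C eps, for any forcing exponent g <= beta. *)
Lemma eta_linear_rec (g : R) (K : nat) : 0 <= g <= beta ->
  (k0 <= K)%nat -> (1 <= K)%nat -> chung_rec eta (C*eps) g D K.
Proof.
  intros Hg HK0 HK1 k Hk.
  assert (Hk1 : 1 <= INR k) by (apply (le_INR 1); lia).
  destruct (hbound k ltac:(lia) ltac:(lia)) as [He1 He2].
  split; [lra|].
  eapply Rle_trans; [apply hrec; lia|]. apply Rplus_le_compat.
  - apply Rmult_le_compat_l; [lra|]. unfold Rdiv.
    assert (C*eps <= C*(1 - eta k)) by (apply Rmult_le_compat_l; lra).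
    assert (0 < / INR k) by (apply Rinv_0_lt_compat; lra).
    assert (C*eps*/INR k <= C*(1-eta k)*/INR k) by (apply Rmult_le_compat_r; lra).
    lra.
  - unfold Rdiv. apply Rmult_le_compat_l; [lra|].
    apply Rinv_le_contravar; [apply Rpower_pos|]. apply Rle_Rpower; lra.
Qed.

Lemma eta_polynomial_decay : exists g M K, 0 < g <= beta /\ 0 <= M /\
  forall k, (K <= k)%nat -> eta k * Rpower (INR k) g <= M.
Proof.
  set (g := Rmin beta (C*eps/2)).
  assert (Hg : 0 < g < C*eps /\ g <= beta).
  { unfold g. split; [split|]; [apply Rmin_glb_lt; nra| |apply Rmin_l].
    apply Rle_lt_trans with (C*eps/2); [apply Rmin_r | nra]. }
  destruct (exists_large_nat (1 + C*eps) (Nat.max k0 1)) as [K [HK HKr]].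
  destruct (chung_rate_subcritical eta (C*eps) g D K) as [M HM]; try lra.
  { apply eta_linear_rec; lia || lra. }
  exists g, (Rmax M 0), K. split; [lra|]. split; [apply Rmax_r|].
  intros k Hk. eapply Rle_trans; [apply HM, Hk | apply Rmax_l].
Qed.

Lemma eta_weighted_rec (g M : R) (K : nat) : 0 < g <= beta -> 0 <= M ->
  (forall k, (K <= k)%nat -> eta k * Rpower (INR k) g <= M) ->
  exists L K', 0 <= L /\ (Nat.max k0 2 <= K')%nat /\ 2*C <= INR K' /\
    chung_rec (weighted eta L g) C beta (2*D) K'.
Proof.
  intros Hg HM0 HM.
  set (L := 16*(C*M)/g).
  assert (HL0 : 0 <= L).
  { unfold L; apply Rmult_le_pos; [nra|left; apply Rinv_0_lt_compat; lra]. }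
  destruct (exists_large_nat (Rmax (Rpower (L+1) (/g)) (2*C)) (Nat.max (Nat.max k0 2) K))
    as [K' [HK' HK'r]].
  pose proof (Rmax_l (Rpower (L+1) (/g)) (2*C)).
  pose proof (Rmax_r (Rpower (L+1) (/g)) (2*C)).
  assert (HK'2 : 2 <= INR K') by (apply (le_INR 2); lia).
  exists L, K'. split; [exact HL0|]. split; [lia|]. split; [lra|].
  apply weighted_chung_rec with M; try lra.
  { unfold L; right; field; lra. }
  intros k Hk.
  assert (Hkr : INR K' <= INR k) by (apply le_INR; lia).
  split; [apply hbound; lia|]. split; [apply HM; lia|]. split; [|apply hrec; lia].
  (* L <= ((L+1)^(1/g))^g <= k^g *)
  apply Rle_trans with (Rpower (Rpower (L+1) (/g)) g).
  - rewrite Rpower_mult. replace (/g * g) with 1 by (field; lra).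
    rewrite Rpower_1; lra.
  - apply Rle_Rpower_l; [lra|]. split; [apply Rpower_pos | lra].
Qed.

Lemma eta_le_weighted (L g : R) (k : nat) : 0 <= L ->
  (k0 <= k)%nat -> (1 <= k)%nat -> eta k <= weighted eta L g k.
Proof.
  intros HL Hk0 Hk1. destruct (hbound k Hk0 Hk1) as [He _].
  unfold weighted.
  assert (0 <= L / Rpower (INR k) g).
  { apply Rmult_le_pos; [lra|left; apply Rinv_0_lt_compat; apply Rpower_pos]. }
  nra.
Qed.

End NonlinearRecursion.

Theorem mainTheorem11
  (eta : nat -> R) (eps C D beta : R) (k0 : nat)
  (heps : 0 < eps) (hC : 0 < C) (hD : 0 < D)
  (hbeta0 : 0 <= beta) (hbeta1 : beta <= 1)
  (hbound : forall k : nat, (k0 <= k)%nat -> (1 <= k)%nat ->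
      0 <= eta k /\ eta k <= 1 - eps)
  (hrec : forall k : nat, (k0 <= k)%nat -> (1 <= k)%nat ->
      eta (S k) <= eta k * (1 - C * (1 - eta k) / INR k)
                   + D / Rpower (INR k) (1 + beta)) :
  limsup_finite (fun k => eta k * rate_h beta C k).
Proof.
  destruct (Rle_lt_or_eq_dec 0 beta hbeta0) as [Hbeta | <-].
  - destruct (eta_polynomial_decay eta eps C D beta k0 heps hC hD Hbeta hbound hrec)
      as (g & M & K & Hg & HM0 & HM).
    destruct (eta_weighted_rec eta eps C D beta k0 hC hD hbeta1 hbound hrec g M K Hg HM0 HM)
      as (L & K' & HL & HK' & HKC & Hz).
    (* eta_k h(k) <= z_k h(k), and z obeys Chung's linear recursion *)
    apply limsup_finite_mono with (fun k => weighted eta L g k * rate_h beta C k) K'.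
    + intros k Hk. apply Rmult_le_compat_r; [apply rate_h_nonneg; lia|].
      apply (eta_le_weighted eta eps k0 hbound); lia || lra.
    + apply (chung_rate_h _ C beta (2*D) K'); try lra; auto. lia.
  - (* beta = 0: h = 1 and eta is bounded *)
    exists 1, (Nat.max k0 1). intros k Hk.
    rewrite rate_h_zero by (lra || lia).
    destruct (hbound k) as [_ He]; lia || lra.
Qed.
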